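(* Every rank-one transformation given by a cutting and stacking construction with a bounded number of cuts ($\sup_n r_n<\infty$) is boundedly rationally ergodic (with $F=I$, the level of $C_0$).
   Context: Rank-one transformation by cutting and stacking: $C_0$ is a single level $I$ of positive finite measure; column $C_n$ is cut into $r_n\ge2$ equal-width subcolumns, spacers are placed above subcolumns, and subcolumns are stacked left to right to form $C_{n+1}$; $T$ maps each level to the one above. For $F$ of positive finite measure, $u_k(F)=\mu(F\cap T^kF)/\mu(F)^2$, $a_n(F)=\sum_{k=0}^{n-1}u_k(F)$, $S_n(f)=\sum_{k=0}^{n-1}f\circ T^k$. $T$ is boundedly rationally ergodic if there is $F$ of positive finite measure with $\mu(X\setminus\bigcup_{i\ge0}T^iF)=0$ and $\sup_{n\ge1}\bigl\|\frac{1}{a_n(F)}S_n(1_F)\bigr\|_\infty<\infty$. *)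

From HB Require Import structures.
From mathcomp Require Import all_boot all_order all_algebra.
From mathcomp Require Import all_classical all_reals all_analysis.
Set Implicit Arguments. Unset Strict Implicit. Unset Printing Implicit Defensive.
Import Order.TTheory GRing.Theory Num.Theory.
Local Open Scope classical_set_scope.
Local Open Scope ring_scope.

Section BRE.
Context {d : measure_display} {X0 : measurableType d} {R : realType}.
Variables (mu : {measure set X0 -> \bar R}) (X : set X0) (T : X0 -> X0).

Definition u_k (F : set X0) (k : nat) : R :=
  fine (mu (F `&` ((iter k T) @` F))) / (fine (mu F)) ^+ 2.

Definition a_n (F : set X0) (n : nat) : R := \sum_(k < n) u_k F k.

Definition S_n (F : set X0) (n : nat) (x : X0) : R :=
  \sum_(k < n) \1_F (iter k T x).

Definition BRE_with (F : set X0) : Prop :=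
  [/\ measurable F /\ F `<=` X, (0 < mu F)%E, (mu F < +oo)%E,
      mu (X `\` \bigcup_i ((iter i T) @` F)) = 0%E &
      exists C : R, forall n : nat, (1 <= n)%N ->
        {ae mu, forall x, X x -> `| S_n F n x / a_n F n | <= C}].

Definition boundedly_rationally_ergodic : Prop := exists F, BRE_with F.
End BRE.

(* Concrete model of a rank-one cutting-and-stacking transformation    *)
(* on the real line with Lebesgue measure.                             *)
(*   l      : measure (length) of the initial level I = [0, l[          *)
(*   r n    : number of subcolumns C_n is cut into                     *)
(*   s n j  : number of spacers placed above subcolumn j (j < r n)      *)
(* Column C_n is encoded as the seq of left endpoints of its levels,    *)
(* bottom to top; all levels of C_n have width w n.  The spacers added  *)
(* at stage n are fresh intervals of width w (n+1) placed side by side  *)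
(* in [M n, M (n+1)[ where M n = (height of C_n) * w n = mu(C_n).      *)
Section RankOne.
Variables (R : realType) (l : R) (r : nat -> nat) (s : nat -> nat -> nat).

Definition rk1_width (n : nat) : R := l / (\prod_(m < n) r m)%:R.

Definition rk1_spc_before (n j : nat) : nat := \sum_(j' < j) s n j'.

Fixpoint rk1_col (n : nat) : seq R :=
  match n with
  | 0 => [:: 0]
  | m.+1 =>
      let c := rk1_col m in
      let w' := rk1_width m.+1 in
      let M := (size c)%:R * rk1_width m in
      flatten [seq [seq p + j%:R * w' | p <- c] ++
                   [seq M + (rk1_spc_before m j + k)%:R * w' | k <- iota 0 (s m j)]
              | j <- iota 0 (r m)]
  end.

Definition rk1_height (n : nat) : nat := size (rk1_col n).

Definition rk1_level (n i : nat) : set R :=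
  `[nth 0 (rk1_col n) i, nth 0 (rk1_col n) i + rk1_width n[%classic.

Definition rk1_space : set R :=
  [set x | exists n i, (i < rk1_height n)%N /\ rk1_level n i x].

(* T maps each (non-top) level of C_n onto the level above it by translation;
   it is the identity on the remaining (null) set. *)
Definition rk1_cond (x : R) (p : nat * nat) : Prop :=
  (p.2.+1 < rk1_height p.1)%N /\ rk1_level p.1 p.2 x.

Definition rk1_T (x : R) : R :=
  let p := xget (0%N, 0%N) (rk1_cond x) in
  if `[< rk1_cond x p >]
  then x - nth 0 (rk1_col p.1) p.2 + nth 0 (rk1_col p.1) p.2.+1
  else x.
End RankOne.

(* Measure everything in the column C_n in units of its width: the levels of
   C_n are the cells [p w_n, (p+1) w_n[ for p ranging over a permutation
   [col_code n] of [0, h_n[, and I is the union of the K_n = r_0 ... r_(n-1)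
   cells with p < K_n.  Since T climbs the levels of C_q and, when leaving its
   top, either leaves C_q or restarts at its bottom, an orbit segment of length
   n <= h_q meets I at most 2 K_q times.  Conversely, for n >= h_q,
   a_n(I) >= (w_q / l^2) #{pairs of levels of C_q in I} >= K_q / (2 l).
   Choosing h_m <= n <= h_(m+1) gives S_n(1_I) / a_n(I) <= 4 l K_(m+1) / K_m
   <= 4 l sup_n r_n. *)
From HB Require Import structures.
From mathcomp Require Import all_boot all_order all_algebra.
From mathcomp Require Import all_classical all_reals all_analysis.
From mathcomp Require Import zify ring lra.
Import Order.TTheory GRing.Theory Num.Theory.
Set Implicit Arguments.
Unset Strict Implicit.
Unset Printing Implicit Defensive.

Lemma size_flatten_iota T (f : nat -> seq T) n :
  size (flatten [seq f j | j <- iota 0 n]) = (\sum_(j < n) size (f j))%N.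
Proof.
elim: n => [|n IH]; first by rewrite big_ord0.
by rewrite big_ord_recr -[in iota _ _]addn1 iotaD map_cat flatten_cat size_cat IH /= cats0.
Qed.

Lemma nth_flatten_iota T (x0 : T) (f : nat -> seq T) n j t :
  (j < n)%N -> (t < size (f j))%N ->
  nth x0 (flatten [seq f j | j <- iota 0 n]) (\sum_(j' < j) size (f j') + t)%N
  = nth x0 (f j) t.
Proof.
move=> jn tf; have -> : n = (j + (n - j).-1.+1)%N by lia.
rewrite iotaD map_cat flatten_cat nth_cat size_flatten_iota ltnNge leq_addr /=.
by rewrite addKn add0n /= nth_cat tf.
Qed.

Lemma flatten_iota_index T (f : nat -> seq T) n i :
  (i < \sum_(j < n) size (f j))%N ->
  exists j t, [/\ (j < n)%N, (t < size (f j))%N & i = \sum_(j' < j) size (f j') + t]%N.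
Proof.
elim: n => [|n IH]; first by rewrite big_ord0.
rewrite big_ord_recr /= => hi.
have [/IH [j [t [jn tf ->]]]|hge] := ltnP i (\sum_(j < n) size (f j)).
  by exists j, t; split => //; lia.
by exists n, (i - \sum_(j < n) size (f j))%N; rewrite ltn_subLR // subnKC.
Qed.

Lemma sum_bool_count (b : pred nat) n : (\sum_(k < n) b k)%N = count b (iota 0 n).
Proof.
elim: n => [|n IH]; first by rewrite big_ord0.
by rewrite big_ord_recr -[in iota _ _]addn1 iotaD /= IH count_cat /= addn0.
Qed.

Lemma eq_mulnDr_small a b c d k :
  (b < k)%N -> (d < k)%N -> (a * k + b = c * k + d)%N -> a = c /\ b = d.
Proof.
move=> bk dk e; have ac : a = c by nia.
by subst c; split => //; lia.
Qed.

Lemma count_comp_le (A : pred nat) (g : nat -> nat) h ks : uniq ks ->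
  (forall v, A v -> v < h)%N ->
  {in [pred k | (k \in ks) && A (g k)] &, injective g} ->
  (count (A \o g) ks <= count A (iota 0 h))%N.
Proof.
move=> uks hA inj; rewrite -!size_filter -(size_map g); apply: uniq_leq_size.
  rewrite map_inj_in_uniq ?filter_uniq // => x y.
  by rewrite !mem_filter => /andP[a b] /andP[c d]; apply: inj; rewrite inE ?a ?b ?c ?d.
move=> x /mapP [k]; rewrite mem_filter => /andP [Agk _] ->.
by rewrite mem_filter mem_iota add0n hA ?andbT.
Qed.

(* Over [n <= h] steps, a walk on [0, h) that climbs by one and can only jump
   back to 0 splits into at most two strictly increasing runs. *)
Lemma count_climb_restart_le (h : nat) (A : pred nat) (g : nat -> nat) n :
  (forall k, (g k).+1 < h -> g k.+1 = (g k).+1)%N ->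
  (forall k, g k.+1 < h -> g k.+1 = 0 \/ g k.+1 = (g k).+1)%N ->
  (forall v, A v -> v < h)%N -> (n <= h)%N ->
  (count (A \o g) (iota 0 n) <= 2 * count A (iota 0 h))%N.
Proof.
move=> climb restart hA nh.
pose t := find (fun k => (0 < k)%N && (g k == 0%N)) (iota 0 n).
have tn : (t <= n)%N by rewrite -(size_iota 0 n) find_size.
have before_t k : (k < t)%N -> (g k < h)%N -> g k = (g 0 + k)%N.
  elim: k => [|k IH] kt gk; first by rewrite addn0.
  have := before_find 0%N kt; rewrite nth_iota ?add0n /=; last by lia.
  move=> /negbT gk0; have [e|e] := restart k gk; first by rewrite e in gk0.
  by rewrite e IH; lia.
have after_t : (t < n)%N -> forall k, (t + k < n)%N -> g (t + k) = k.
  move=> tn' k; elim: k => [|k IH] tk.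
    have : has (fun k => (0 < k)%N && (g k == 0%N)) (iota 0 n).
      by rewrite has_find size_iota.
    by move=> /(nth_find 0%N); rewrite -/t nth_iota // addn0 => /andP [_ /eqP].
  by rewrite addnS climb IH //; lia.
rewrite -(subnKC tn) iotaD count_cat mul2n -addnn leq_add //.
  apply: count_comp_le; [exact: iota_uniq|exact: hA|].
  move=> k1 k2; rewrite !inE !mem_iota !add0n => /andP [k1t A1] /andP [k2t A2] e.
  by have := before_t _ k1t (hA _ A1); have := before_t _ k2t (hA _ A2); lia.
apply: count_comp_le; [exact: iota_uniq|exact: hA|].
move=> k1 k2; rewrite !inE !mem_iota => /andP [k1t _] /andP [k2t _] e.
have tn' : (t < n)%N by lia.
by have := after_t tn' (k1 - t)%N; have := after_t tn' (k2 - t)%N; rewrite !subnKC; lia.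
Qed.

Lemma sum_lag_rev (g : nat -> nat) h a : (a < h)%N ->
  (\sum_(0 <= k < h) (k <= a) * g (a - k) = \sum_(0 <= b < h) (b <= a) * g b)%N.
Proof.
move=> ah; rewrite !(@big_cat_nat _ _ _ a.+1 0 h) //=.
have zero F : (\sum_(a.+1 <= k < h) (k <= a) * F k = 0)%N.
  by rewrite big_nat_cond big1 // => k /andP [/andP [ak _] _]; rewrite leqNgt ak.
rewrite !zero !addn0 big_nat_rev /=; apply: eq_big_nat => k /andP [_ ka].
by rewrite add0n subSS subKn ?leq_subr ?(ltnSE ka).
Qed.

(* Summing over the lag [k] the correlations [f a * f (a - k)] counts each
   unordered pair once and the diagonal twice. *)
Lemma sqr_sum_le_lag_sum (f : nat -> nat) h :
  ((\sum_(0 <= a < h) f a) ^ 2 <=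
   2 * \sum_(0 <= k < h) \sum_(0 <= a < h) (k <= a) * f a * f (a - k))%N.
Proof.
rewrite exchange_big_nat /=.
have -> : (\sum_(0 <= a < h) \sum_(0 <= k < h) (k <= a) * f a * f (a - k) =
           \sum_(0 <= a < h) \sum_(0 <= b < h) (b <= a) * f a * f b)%N.
  apply: eq_big_nat => a /andP [_ ah].
  rewrite (eq_bigr (fun k => f a * ((k <= a) * f (a - k))))%N; last by move=> k _; lia.
  by rewrite -big_distrr /= sum_lag_rev // big_distrr /=; apply: eq_big_nat => b _; lia.
set S := (\sum_(0 <= a < h) \sum_(0 <= b < h) (b <= a) * f a * f b)%N.
have eS : S = (\sum_(0 <= a < h) \sum_(0 <= b < h) (a <= b) * f a * f b)%N.
  by rewrite /S exchange_big_nat /=; apply: eq_bigr => a _; apply: eq_bigr => b _; lia.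
rewrite mul2n -addnn {2}eS -big_split /= expnS expn1 big_distrl /=.
apply: leq_sum => a _; rewrite -big_split /= big_distrr /=; apply: leq_sum => b _.
by case: (leqP a b) => ab; [have : (0 <= (b <= a))%N by []|rewrite (ltnW ab)]; nia.
Qed.

Section RankOneModel.
Variables (r : nat -> nat) (s : nat -> nat -> nat).
Hypothesis r_ge2 : forall n, (2 <= r n)%N.

Local Notation spc := (rk1_spc_before s).

Lemma spc_S m j : spc m j.+1 = (spc m j + s m j)%N.
Proof. by rewrite /rk1_spc_before big_ord_recr. Qed.

Lemma spc_le m j1 j2 : (j1 <= j2)%N -> (spc m j1 <= spc m j2)%N.
Proof.
move=> h; rewrite -(subnKC h); elim: (j2 - j1)%N => [|k IH]; first by rewrite addn0.
by rewrite addnS spc_S; lia.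
Qed.

Lemma spc_ltD m j1 j2 : (j1 < j2)%N -> (spc m j1 + s m j1 <= spc m j2)%N.
Proof. by move=> h; rewrite -spc_S; apply: spc_le. Qed.

(* Column [C_n] measured in units of [rk1_width n]: its [i]-th level is
   [code n i * w_n, (code n i + 1) * w_n[ (see [rk1_col_code] below). *)
Fixpoint col_code n : seq nat :=
  match n with
  | 0 => [:: 0]
  | m.+1 => flatten [seq [seq p * r m + j | p <- col_code m] ++
              [seq size (col_code m) * r m + (spc m j + k) | k <- iota 0 (s m j)]
              | j <- iota 0 (r m)]
  end%N.

Definition col_height n := size (col_code n).
Definition code n i := nth 0%N (col_code n) i.

Definition sub_block m j := ([seq p * r m + j | p <- col_code m] ++
  [seq col_height m * r m + (spc m j + k) | k <- iota 0 (s m j)])%N.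

Definition block_start m j := (j * col_height m + spc m j)%N.

Lemma col_code_S m : col_code m.+1 = flatten [seq sub_block m j | j <- iota 0 (r m)].
Proof. by []. Qed.

Lemma size_sub_block m j : size (sub_block m j) = (col_height m + s m j)%N.
Proof. by rewrite size_cat !size_map size_iota. Qed.

Lemma sum_size_sub_block m j : (\sum_(j' < j) size (sub_block m j'))%N = block_start m j.
Proof.
rewrite /block_start; elim: j => [|j IH].
  by rewrite big_ord0 /rk1_spc_before big_ord0.
by rewrite big_ord_recr /= IH size_sub_block spc_S; lia.
Qed.

Lemma col_height_S m : col_height m.+1 = block_start m (r m).
Proof.
rewrite /col_height col_code_S size_flatten_iota -sum_size_sub_block.
by apply: eq_bigr => j _; rewrite size_sub_block.
Qed.

Lemma block_start_S m j : block_start m j.+1 = (block_start m j + (col_height m + s m j))%N.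
Proof. by rewrite /block_start spc_S; lia. Qed.

Lemma block_start_le m j1 j2 : (j1 <= j2)%N -> (block_start m j1 <= block_start m j2)%N.
Proof. by move=> h; rewrite /block_start; have := spc_le m h; nia. Qed.

Lemma block_start_lt m j t : (j < r m)%N -> (t < col_height m)%N ->
  (block_start m j + t < col_height m.+1)%N.
Proof.
move=> jr tH; rewrite col_height_S.
by have := block_start_le m jr; rewrite block_start_S; lia.
Qed.

Lemma code_copy m j t : (j < r m)%N -> (t < col_height m)%N ->
  code m.+1 (block_start m j + t) = (code m t * r m + j)%N.
Proof.
move=> jr tH; rewrite /code col_code_S -sum_size_sub_block nth_flatten_iota //.
  by rewrite nth_cat size_map tH (nth_map 0%N).
by rewrite size_sub_block; lia.
Qed.

Lemma code_spacer m j k : (j < r m)%N -> (k < s m j)%N ->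
  code m.+1 (block_start m j + (col_height m + k)) =
  (col_height m * r m + (spc m j + k))%N.
Proof.
move=> jr ks; rewrite /code col_code_S -sum_size_sub_block nth_flatten_iota //.
  rewrite nth_cat size_map ltnNge leq_addr /= addKn (nth_map 0%N) ?size_iota //.
  by rewrite nth_iota.
by rewrite size_sub_block; lia.
Qed.

Lemma col_code_S_cases m i : (i < col_height m.+1)%N -> exists j t, (j < r m)%N /\
  ((t < col_height m /\ i = block_start m j + t /\ code m.+1 i = code m t * r m + j) \/
   (t < s m j /\ i = block_start m j + (col_height m + t) /\
    code m.+1 i = col_height m * r m + (spc m j + t)))%N.
Proof.
rewrite {1}/col_height col_code_S size_flatten_iota => /flatten_iota_index [j [t []]].
rewrite size_sub_block sum_size_sub_block => jr tl ->; exists j.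
have [ht|ht] := ltnP t (col_height m).
  by exists t; split => //; left; rewrite code_copy.
have [k ek] : exists k, t = (col_height m + k)%N by exists (t - col_height m)%N; lia.
by subst t; exists k; split => //; right; rewrite code_spacer //; lia.
Qed.

Lemma col_height_gt0 n : (0 < col_height n)%N.
Proof. by elim: n => [//|n IH]; rewrite col_height_S /block_start; have := r_ge2 n; nia. Qed.

Lemma col_height_S_ge m : (r m * col_height m <= col_height m.+1)%N.
Proof. by rewrite col_height_S /block_start; lia. Qed.

Lemma code_lt_inj n : (forall i, i < col_height n -> code n i < col_height n)%N /\
  {in gtn (col_height n) &, injective (code n)}.
Proof.
elim: n => [|m [IHlt IHinj]].
  by split => [i|i i']; rewrite /col_height /= ?inE ?ltnS ?leqn0 => /eqP-> // /eqP->.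
have HS := col_height_S m; have Hge := col_height_S_ge m; have rm := r_ge2 m.
have spc_r j : (j < r m)%N -> (spc m j + s m j <= spc m (r m))%N.
  by move=> jr; rewrite -spc_S; apply: spc_le.
split.
  move=> i /col_code_S_cases [j [t [jr [[tl [-> ->]]|[tl [-> ->]]]]]].
    by have := IHlt _ tl; rewrite /block_start in HS *; nia.
  by have := spc_r _ jr; rewrite /block_start in HS *; nia.
move=> i i'; rewrite !inE.
move=> /col_code_S_cases [j [t [jr [[tl [-> ->]]|[tl [-> ->]]]]]]
       /col_code_S_cases [j' [t' [jr' [[tl' [-> ->]]|[tl' [-> ->]]]]]].
- by move=> /eq_mulnDr_small [] // e ->; rewrite (IHinj t t') ?inE.
- by have := IHlt _ tl; nia.
- by have := IHlt _ tl'; nia.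
- move=> e; have e2 : (spc m j + t = spc m j' + t')%N by lia.
  case: (ltngtP j j') => hj; [have := spc_ltD m hj|have := spc_ltD m hj|]; try lia.
  by subst; have -> : t = t' by lia.
Qed.

Lemma code_lt n i : (i < col_height n)%N -> (code n i < col_height n)%N.
Proof. exact: (code_lt_inj n).1. Qed.

Lemma code_inj n i i' : (i < col_height n)%N -> (i' < col_height n)%N ->
  code n i = code n i' -> i = i'.
Proof. by move=> hi hi'; apply: (code_lt_inj n).2. Qed.

Lemma perm_col_code n : perm_eq (col_code n) (iota 0 (col_height n)).
Proof.
have u : uniq (col_code n) by apply/(uniqP 0%N) => i i'; rewrite !inE; apply: code_inj.
apply: uniq_perm => //; first exact: iota_uniq.
have sub : {subset col_code n <= iota 0 (col_height n)}.
  by move=> x /(nthP 0%N) [i hi <-]; rewrite mem_iota add0n; apply: code_lt.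
by have [] := uniq_min_size u sub _; rewrite ?size_iota.
Qed.

Lemma code_onto n v : (v < col_height n)%N ->
  exists2 i, (i < col_height n)%N & code n i = v.
Proof.
move=> hv; have : v \in col_code n by rewrite (perm_mem (perm_col_code n)) mem_iota.
by move=> /(nthP 0%N) [i hi e]; exists i.
Qed.

Lemma code0 n : code n 0 = 0%N.
Proof.
elim: n => [//|m IH]; have := @code_copy m 0 0.
rewrite /block_start mul0n /rk1_spc_before big_ord0 IH => ->//.
  by have := r_ge2 m; lia.
exact: col_height_gt0.
Qed.

Lemma col_height_bracket n : (1 <= n)%N ->
  exists m, (col_height m <= n <= col_height m.+1)%N.
Proof.
elim: n => [//|[|n] IH] _.
  by exists 0%N; have := col_height_S_ge 0; have := r_ge2 0; rewrite /col_height /=; nia.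
have [m /andP [h1 h2]] := IH erefl.
have [h3|h3] := ltnP n.+1 (col_height m.+1); first by exists m; rewrite h3 andbT; lia.
exists m.+1; apply/andP; split; first lia.
by have := col_height_S_ge m.+1; have := r_ge2 m.+1; have := col_height_gt0 m.+1; nia.
Qed.

(* [I] is cut into [ncut n] levels of [C_n]: those whose code is below [ncut n]. *)
Definition ncut n := (\prod_(m < n) r m)%N.

Lemma ncut_S n : ncut n.+1 = (ncut n * r n)%N.
Proof. by rewrite /ncut big_ord_recr. Qed.

Lemma ncut_gt0 n : (0 < ncut n)%N.
Proof.
elim: n => [|n IH]; first by rewrite /ncut big_ord0.
by rewrite ncut_S; have := r_ge2 n; nia.
Qed.

Lemma leq_ncut n : (n <= ncut n)%N.
Proof.
elim: n => [//|n IH]; rewrite ncut_S; have := r_ge2 n; have := ncut_gt0 n; nia.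
Qed.

Lemma ncut_le_height n : (ncut n <= col_height n)%N.
Proof.
elim: n => [|n IH]; first by rewrite /ncut big_ord0.
by rewrite ncut_S; have := col_height_S_ge n; nia.
Qed.

Definition in_base q a := (a < col_height q)%N && (code q a < ncut q)%N.

Lemma count_in_base q : count (in_base q) (iota 0 (col_height q)) = ncut q.
Proof.
rewrite (eq_in_count (a2 := fun a => code q a < ncut q)%N); last first.
  by move=> a; rewrite mem_iota /in_base => /andP [_ ->].
rewrite -(count_map (code q) (fun v => v < ncut q)%N).
have -> : map (code q) (iota 0 (col_height q)) = col_code q by apply: mkseq_nth.
have hle := ncut_le_height q.
rewrite (permP (perm_col_code q)) -(subnKC hle) iotaD count_cat.
rewrite (eq_in_count (a2 := predT)); last by move=> x; rewrite mem_iota.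
rewrite count_predT size_iota (eq_in_count (a2 := pred0)) ?count_pred0 ?addn0 //.
by move=> x; rewrite mem_iota /=; lia.
Qed.

Definition lag_count m k :=
  count (fun a => [&& k <= a, in_base m a & in_base m (a - k)])%N (iota 0 (col_height m)).

Lemma sqr_ncut_le_lag_count m : (ncut m ^ 2 <= 2 * \sum_(k < col_height m) lag_count m k)%N.
Proof.
have := sqr_sum_le_lag_sum (fun a => (in_base m a : nat)) (col_height m).
rewrite big_mkord sum_bool_count count_in_base big_mkord.
congr (_ <= _ * _)%N; apply: eq_bigr => k _.
rewrite /lag_count -sum_bool_count big_mkord; apply: eq_bigr => a _.
by case: (k <= a)%N; case: (in_base m a); case: (in_base m (a - k)).
Qed.

(* [ncut_between q N] copies of [C_q] are stacked to form [C_N]; the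
   [code]s of [C_N] refine those of [C_q] by this factor. *)
Definition ncut_between q N := (\prod_(q <= m < N) r m)%N.

Lemma ncut_between_S q N : (q <= N)%N -> ncut_between q N.+1 = (r N * ncut_between q N)%N.
Proof. by move=> h; rewrite /ncut_between big_nat_recr //= mulnC. Qed.

Lemma ncut_between_id q : ncut_between q q = 1%N.
Proof. by rewrite /ncut_between big_geq. Qed.

Lemma ncut_between_gt0 q N : (0 < ncut_between q N)%N.
Proof.
rewrite /ncut_between; elim/big_ind: _ => // [x y|m _]; first by lia.
by have := r_ge2 m; lia.
Qed.

Lemma height_mul_ncut_between q N : (q <= N)%N ->
  (col_height q * ncut_between q N <= col_height N)%N.
Proof.
move=> h; rewrite -(subnKC h); elim: (N - q)%N => [|k IH].
  by rewrite addn0 ncut_between_id muln1.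
by rewrite addnS ncut_between_S ?leq_addr //; have := col_height_S_ge (q + k); nia.
Qed.

(* The level of [C_q] containing level [i] of [C_N] has code [ancestor q N i]
   ([ancestor q N i >= col_height q] when it is a spacer added after stage [q]). *)
Definition ancestor q N i := (code N i %/ ncut_between q N)%N.

Lemma ancestor0 q N : ancestor q N 0 = 0%N.
Proof. by rewrite /ancestor code0 div0n. Qed.

Lemma ancestor_copy q N j t : (q <= N)%N -> (j < r N)%N -> (t < col_height N)%N ->
  ancestor q N.+1 (block_start N j + t) = ancestor q N t.
Proof.
move=> qN jr tH; have rN := r_ge2 N.
rewrite /ancestor ncut_between_S // code_copy // divnMA divnMDl; last by lia.
by rewrite (divn_small jr) addn0.
Qed.

Lemma ancestor_spacer q N j k : (q <= N)%N -> (j < r N)%N -> (k < s N j)%N ->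
  (col_height q <= ancestor q N.+1 (block_start N j + (col_height N + k)))%N.
Proof.
move=> qN jr ks; have rN := r_ge2 N.
rewrite /ancestor ncut_between_S // code_spacer // divnMA leq_divRL ?ncut_between_gt0 //.
by have := height_mul_ncut_between qN; rewrite leq_divRL; nia.
Qed.

(* Inside [C_(q+k)], the level below one that lies in level [a > 0] of [C_q]
   lies in level [a - 1] of [C_q]: copies of [C_q] are never cut. *)
Lemma ancestor_pred q k i a : (i.+1 < col_height (q + k))%N ->
  (0 < a < col_height q)%N ->
  ancestor q (q + k) i.+1 = code q a -> ancestor q (q + k) i = code q a.-1.
Proof.
elim: k i => [|k IH] i.
  rewrite addn0 /ancestor ncut_between_id !divn1 => hi ha e.
  have ia : i.+1 = a by apply: (@code_inj q) => //; lia.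
  by rewrite -ia.
rewrite addnS => hi ha.
have [j [t [jr [[tl [ei _]]|[tl [ei _]]]]]] := col_code_S_cases hi; rewrite ei.
- case: t tl ei => [|t] tl ei.
    rewrite ancestor_copy ?leq_addr ?col_height_gt0 // ancestor0 => e.
    have := @code_inj q 0 a (col_height_gt0 q); rewrite code0 => /(_ _ e); lia.
  have -> : i = (block_start (q + k) j + t)%N by lia.
  by rewrite !ancestor_copy ?leq_addr //; try lia; apply: IH => //; lia.
- move=> e; have := ancestor_spacer (leq_addr k q) jr tl; rewrite e.
  have : (code q a < col_height q)%N by apply: code_lt; lia.
  lia.
Qed.

Section Geometry.
Local Open Scope classical_set_scope.
Local Open Scope ring_scope.
Variables (R : realType) (l : R).
Hypothesis l_gt0 : 0 < l.

Local Notation w := (rk1_width l r).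
Local Notation lvl := (rk1_level l r s).
Local Notation T := (rk1_T l r s).
Local Notation X := (rk1_space l r s).
Local Notation I := (lvl 0 0).
Local Notation c n i := (nth 0 (rk1_col l r s n) i).

Lemma width_gt0 n : 0 < w n.
Proof. by rewrite divr_gt0 // ltr0n ncut_gt0. Qed.

Lemma width_S n : w n = (r n)%:R * w n.+1.
Proof.
have h1 : (ncut n)%:R != 0 :> R by rewrite pnatr_eq0 -lt0n ncut_gt0.
have h2 : (r n)%:R != 0 :> R by rewrite pnatr_eq0; have := r_ge2 n; lia.
by rewrite /rk1_width -/(ncut n) -/(ncut n.+1) ncut_S natrM; field; rewrite h1 h2.
Qed.

Lemma width_mul_ncut n : w n * (ncut n)%:R = l.
Proof. by rewrite -mulrA mulVf ?mulr1 // pnatr_eq0 -lt0n ncut_gt0. Qed.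

Lemma width0 : w 0 = l.
Proof. by rewrite /rk1_width big_ord0 divr1. Qed.

Lemma rk1_col_code n : rk1_col l r s n = [seq p%:R * w n | p <- col_code n].
Proof.
elim: n => [|m IH]; first by rewrite /= mul0r.
rewrite /= IH map_flatten -map_comp; congr flatten; apply: eq_map => j /=.
rewrite map_cat -!map_comp size_map; congr cat; apply: eq_map => p /=.
  by rewrite natrD natrM width_S; ring.
by rewrite !natrD natrM width_S; ring.
Qed.

Lemma rk1_heightE n : rk1_height l r s n = col_height n.
Proof. by rewrite /rk1_height rk1_col_code size_map. Qed.

Lemma nth_rk1_col n i : c n i = (code n i)%:R * w n.
Proof.
rewrite rk1_col_code /code; have [h|h] := ltnP i (size (col_code n)).
  by rewrite (nth_map 0%N).
by rewrite !nth_default ?size_map // mul0r.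
Qed.

Definition cell n (x : R) := Num.truncn (x / w n).

Lemma cell_itv n x : 0 <= x -> (cell n x)%:R * w n <= x < (cell n x).+1%:R * w n.
Proof.
move=> x0; have wp := width_gt0 n.
by have := truncn_itv (divr_ge0 x0 (ltW wp)); rewrite ler_pdivlMr // ltr_pdivrMr.
Qed.

Lemma rk1_levelP n i x : lvl n i x <-> 0 <= x /\ cell n x = code n i.
Proof.
rewrite /rk1_level /= in_itv /= nth_rk1_col; have wp := width_gt0 n.
have E y : y%:R * w n + w n = y.+1%:R * w n by rewrite -nat1r mulrDl mul1r addrC.
split.
  move=> /andP [h1 h2]; have x0 : 0 <= x by apply: le_trans h1; rewrite mulr_ge0 // ltW.
  split => //; apply: truncn_def.
  by rewrite ler_pdivlMr // ltr_pdivrMr // h1 -E.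
by move=> [x0 e]; have := cell_itv n x0; rewrite e E.
Qed.

Lemma rk1_level_ge0 n i x : lvl n i x -> 0 <= x.
Proof. by move=> /rk1_levelP []. Qed.

Lemma cell_S n x : 0 <= x -> cell n x = (cell n.+1 x %/ r n)%N.
Proof.
move=> x0; apply: truncn_def.
have wp := width_gt0 n.+1; have rn : (0 < r n)%N by have := r_ge2 n; lia.
have rp : 0 < (r n)%:R :> R by rewrite ltr0n.
have := truncn_itv (divr_ge0 x0 (ltW wp)); rewrite -/(cell n.+1 x) => /andP [h1 h2].
have -> : x / w n = (x / w n.+1) / (r n)%:R.
  by rewrite width_S; field; rewrite gt_eqF //= gt_eqF.
rewrite ler_pdivlMr // ltr_pdivrMr // -!natrM; apply/andP; split.
  by apply: le_trans h1; rewrite ler_nat leq_divM.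
by apply: lt_le_trans h2 _; rewrite ler_nat ltn_ceil.
Qed.

Lemma cell_between q N x : (q <= N)%N -> 0 <= x ->
  cell q x = (cell N x %/ ncut_between q N)%N.
Proof.
move=> h x0; rewrite -(subnKC h); elim: (N - q)%N => [|k IH].
  by rewrite addn0 ncut_between_id divn1.
by rewrite addnS ncut_between_S ?leq_addr // divnMA -cell_S.
Qed.

Lemma cell_lt_ncut q y : 0 <= y -> (cell q y < ncut q)%N = (y < l).
Proof.
move=> y0; rewrite /cell truncn_lt_nat; last by rewrite divr_ge0 // ltW ?width_gt0.
by rewrite ltr_pdivrMr ?width_gt0 // mulrC width_mul_ncut.
Qed.

Lemma cell_lt_height n i x : (i < col_height n)%N -> lvl n i x -> (cell n x < col_height n)%N.
Proof. by move=> h /rk1_levelP [_ ->]; apply: code_lt. Qed.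

Lemma rk1_level_inj n i i' x : (i < col_height n)%N -> (i' < col_height n)%N ->
  lvl n i x -> lvl n i' x -> i = i'.
Proof.
by move=> h h' /rk1_levelP [_ e] /rk1_levelP [_ e']; apply: (code_inj h h'); rewrite -e -e'.
Qed.

Lemma rk1_level_cover n x : 0 <= x -> (cell n x < col_height n)%N ->
  exists2 a, (a < col_height n)%N & lvl n a x.
Proof. by move=> x0 /code_onto [a ha e]; exists a => //; apply/rk1_levelP. Qed.

Lemma rk1_level_S N i x : lvl N i x -> (i < col_height N)%N ->
  let j := (cell N.+1 x %% r N)%N in
  (j < r N)%N /\ lvl N.+1 (block_start N j + i) x.
Proof.
move=> hx iH j; have x0 := rk1_level_ge0 hx; have rp : (0 < r N)%N by have := r_ge2 N; lia.
split; first by rewrite ltn_pmod.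
apply/rk1_levelP; split => //; rewrite code_copy ?ltn_pmod //.
by move: hx => /rk1_levelP [_]; rewrite (cell_S N x0) => <-; rewrite /j -divn_eq.
Qed.

Lemma rk1_level_descend n k i x : lvl n i x -> (i.+1 < col_height n)%N -> exists i',
  [/\ lvl (n + k) i' x, (i'.+1 < col_height (n + k))%N &
      c (n + k) i'.+1 - c (n + k) i' = c n i.+1 - c n i].
Proof.
move=> hx hi; elim: k => [|k [i' [h1 h2 h3]]]; first by exists i; rewrite addn0.
have [jr h4] := rk1_level_S h1 (ltnW h2).
set j := (cell (n + k).+1 x %% r (n + k))%N in jr h4.
exists (block_start (n + k) j + i'); rewrite addnS; split => //.
  by have := block_start_lt jr h2; rewrite addnS.
rewrite -[(block_start _ _ + i').+1]addnS -h3 !nth_rk1_col !code_copy //; try lia.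
by rewrite (width_S (n + k)) !natrD !natrM; ring.
Qed.

(* Hence the choice made by [xget] in [rk1_T] is irrelevant. *)
Lemma rk1_cond_step x N i N' i' : rk1_cond l r s x (N, i) -> rk1_cond l r s x (N', i') ->
  c N i.+1 - c N i = c N' i'.+1 - c N' i'.
Proof.
rewrite /rk1_cond !rk1_heightE /= => [[hi hx]] [hi' hx'].
wlog NN : N i N' i' hi hx hi' hx' / (N <= N')%N.
  by move=> W; case: (leqP N N') => h; [apply: W|apply/esym/W => //; apply: ltnW].
have [i'' [h1 h2 <-]] := rk1_level_descend (N' - N) hx hi.
rewrite subnKC // in h1 h2 *.
by rewrite (rk1_level_inj (ltnW h2) (ltnW hi') h1 hx').
Qed.

Lemma rk1_T_level N i x : lvl N i x -> (i.+1 < col_height N)%N ->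
  T x = x - c N i + c N i.+1.
Proof.
move=> hx hi; have hc : rk1_cond l r s x (N, i) by split; rewrite ?rk1_heightE.
rewrite /rk1_T; set p := xget _ _.
have hp : rk1_cond l r s x p by apply: xgetI hc.
rewrite asboolT //; case: p hp => N' i' hp /=.
by have := rk1_cond_step hp hc; lra.
Qed.

Lemma rk1_T_fix x : (forall p, ~ rk1_cond l r s x p) -> T x = x.
Proof. by move=> h; rewrite /rk1_T asboolF. Qed.

Lemma rk1_T_in N i x : lvl N i x -> (i.+1 < col_height N)%N -> lvl N i.+1 (T x).
Proof.
move=> hx hi; rewrite (rk1_T_level hx hi); move: hx; rewrite /rk1_level /= !in_itv /=.
by move=> /andP [h1 h2]; apply/andP; split; lra.
Qed.

Lemma iter_rk1_T_onto N i k y : lvl N (i + k) y -> (i + k < col_height N)%N ->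
  exists2 x, lvl N i x & iter k T x = y.
Proof.
elim: k y => [|k IH] y; first by rewrite addn0 => hy _; exists y.
rewrite addnS => hy hk.
pose x1 := y - c N (i + k).+1 + c N (i + k).
have hx1 : lvl N (i + k) x1.
  by move: hy; rewrite /x1 /rk1_level /= !in_itv /= => /andP [h1 h2]; apply/andP; split; lra.
have [x hx ex] := IH x1 hx1 (ltnW hk).
by exists x => //; rewrite iterS ex (rk1_T_level hx1 hk) /x1; ring.
Qed.

Lemma width_small eps : 0 < eps -> exists N, forall n, (N <= n)%N -> w n < eps.
Proof.
move=> eps0; exists (Num.truncn (l / eps)).+1 => n hn.
rewrite /rk1_width ltr_pdivrMr ?ltr0n ?ncut_gt0 // mulrC -ltr_pdivrMr //.
apply: lt_le_trans (truncnS_gt _) _; rewrite ler_nat.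
exact: leq_trans hn (leq_ncut n).
Qed.

Lemma rk1_top_level_S N i x : lvl N i x -> i.+1 = col_height N ->
  (forall i', (i'.+1 < col_height N.+1)%N -> ~ lvl N.+1 i' x) ->
  exists i', [/\ i'.+1 = col_height N.+1, lvl N.+1 i' x &
    (cell N.+1 x).+1%:R * w N.+1 = (cell N x).+1%:R * w N].
Proof.
move=> hx htop hno; have [jr hx'] := rk1_level_S hx (ltac:(lia) : (i < col_height N)%N).
set j := (cell N.+1 x %% r N)%N in jr hx'.
have x0 := rk1_level_ge0 hx.
have hcell : cell N.+1 x = (cell N x * r N + j)%N by rewrite (cell_S N x0) /j -divn_eq.
clearbody j.
have hlt := block_start_lt jr (ltac:(lia) : (i < col_height N)%N).
have ntop : (col_height N.+1 <= (block_start N j + i).+1)%N.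
  by case: ltnP => // h; have := hno _ h hx'.
have last_copy : j.+1 = r N.
  apply/eqP; rewrite eqn_leq jr /=; apply/negP => /negP; rewrite -ltnNge => hj.
  have := block_start_le N hj; rewrite -col_height_S !block_start_S.
  by have := col_height_gt0 N; lia.
exists (block_start N j + i); split => //; first lia.
by rewrite hcell (width_S N) -last_copy -!nat1r !(natrD, natrM); ring.
Qed.

Lemma rk1_space_nontop x : X x -> exists N i, (i.+1 < col_height N)%N /\ lvl N i x.
Proof.
move=> [N0 [i0 [hi0 hx0]]]; rewrite rk1_heightE in hi0.
apply: contrapT => hno.
have hno' N i : (i.+1 < col_height N)%N -> ~ lvl N i x by move=> h1 h2; apply: hno; exists N, i.
have x0 := rk1_level_ge0 hx0.
(* [x] would stay in the top level of every later column, left of a fixed right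
   end [A], although the widths tend to 0. *)
pose A := (cell N0 x).+1%:R * w N0.
have chain k : exists i, [/\ i.+1 = col_height (N0 + k), lvl (N0 + k) i x &
    (cell (N0 + k) x).+1%:R * w (N0 + k) = A].
  elim: k => [|k [i [e1 e2 e3]]].
    exists i0; rewrite addn0; split => //.
    by case: (ltnP i0.+1 (col_height N0)) => h; [have := hno' _ _ h hx0|lia].
  have [i' [h1 h2 h3]] := rk1_top_level_S e2 e1 (hno' _); rewrite addnS.
  by exists i'; split => //; rewrite h3.
have Ax : x < A by case/andP: (cell_itv N0 x0).
have [N hN] := width_small (ltac:(lra) : 0 < A - x).
have [i [_ _ e3]] := chain N.
have /andP [h1 _] := cell_itv (N0 + N) x0.
have := hN (N0 + N)%N (leq_addl _ _).
have : (cell (N0 + N) x)%:R * w (N0 + N) = A - w (N0 + N) by rewrite -e3 -nat1r; ring.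
lra.
Qed.

Lemma rk1_T_pred_level_coarse N i q a y : lvl N i y -> (i.+1 < col_height N)%N ->
  (N <= q)%N -> (a.+1 < col_height q)%N -> lvl q a.+1 (T y) -> lvl q a y.
Proof.
move=> hy hi Nq ha hTy.
have [i' [h1 h2 _]] := rk1_level_descend (q - N) hy hi; rewrite subnKC // in h1 h2.
have := rk1_level_inj ha h2 hTy (rk1_T_in h1 h2).
by case=> ->.
Qed.

Lemma rk1_T_pred_level_fine q k i a y : lvl (q + k) i y -> (i.+1 < col_height (q + k))%N ->
  (a.+1 < col_height q)%N -> lvl q a.+1 (T y) -> lvl q a y.
Proof.
move=> hy hi ha hTy.
have hTy' := rk1_T_in hy hi; have y0 := rk1_level_ge0 hy.
have e : ancestor q (q + k) i.+1 = code q a.+1.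
  have Ty0 := rk1_level_ge0 hTy.
  rewrite /ancestor; move: hTy' => /rk1_levelP [_ <-]; move: hTy => /rk1_levelP [_ <-].
  by rewrite (@cell_between q (q + k)) ?leq_addr.
have := ancestor_pred hi (ltac:(lia) : (0 < a.+1 < col_height q)%N) e => /= e'.
apply/rk1_levelP; split => //; rewrite (@cell_between q (q + k)) ?leq_addr //.
by move: hy => /rk1_levelP [_ ->].
Qed.

Lemma rk1_T_pred_level q a y : (a.+1 < col_height q)%N ->
  lvl q a.+1 (T y) -> lvl q a y.
Proof.
move=> ha hTy.
have [[[N i] [hi hy]]|hno] := pselect (exists p, rk1_cond l r s y p).
  rewrite rk1_heightE in hi.
  have [Nq|qN] := leqP N q; first exact: rk1_T_pred_level_coarse hy hi Nq ha hTy.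
  have [k ek] : exists k, N = (q + k)%N by exists (N - q)%N; lia.
  by subst N; apply: rk1_T_pred_level_fine hy hi ha hTy.
have hno' p : ~ rk1_cond l r s y p by move=> hp; apply: hno; exists p.
have : X y by exists q, a.+1; rewrite rk1_heightE -(rk1_T_fix hno'); split => //; lia.
move=> /rk1_space_nontop [N [i [hi hy]]]; case: (hno' (N, i)).
by split; rewrite ?rk1_heightE.
Qed.

(* index of the level of [C_q] containing [y], or [col_height q] if there is none *)
Definition level_index q y :=
  if (0 <= y) && (cell q y < col_height q)%N then index (cell q y) (col_code q)
  else col_height q.

Lemma level_index_level q y : (level_index q y < col_height q)%N -> lvl q (level_index q y) y.
Proof.
rewrite /level_index; case: ifP => [/andP [y0 hp] _|]; last by rewrite ltnn.
apply/rk1_levelP; split => //; rewrite /code nth_index //.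
by rewrite (perm_mem (perm_col_code q)) mem_iota.
Qed.

Lemma level_indexE q a y : (a < col_height q)%N -> lvl q a y -> level_index q y = a.
Proof.
move=> ha hy; have y0 := rk1_level_ge0 hy; have hp := cell_lt_height ha hy.
have hf : (level_index q y < col_height q)%N.
  by rewrite /level_index y0 hp /col_height index_mem (perm_mem (perm_col_code q)) mem_iota.
exact: (rk1_level_inj hf ha (level_index_level hf) hy).
Qed.

Lemma level_index_T_climb q y : ((level_index q y).+1 < col_height q)%N ->
  level_index q (T y) = (level_index q y).+1.
Proof.
move=> h; have hf : (level_index q y < col_height q)%N by lia.
by apply: level_indexE => //; apply: rk1_T_in => //; apply: level_index_level.
Qed.

Lemma level_index_T_restart q y : (level_index q (T y) < col_height q)%N ->
  level_index q (T y) = 0%N \/ level_index q (T y) = (level_index q y).+1.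
Proof.
move=> ha; have hTy := level_index_level ha.
case: (level_index q (T y)) ha hTy => [|a] ha hTy; [by left|right].
by rewrite (level_indexE (ltnW ha) (rk1_T_pred_level ha hTy)).
Qed.

Lemma in_baseP q y : I y <-> in_base q (level_index q y).
Proof.
have I_itv : I y <-> 0 <= y < l by rewrite /rk1_level /= in_itv /= add0r width0.
rewrite I_itv; split.
  move=> /andP [y0 yl]; have hp : (cell q y < ncut q)%N by rewrite cell_lt_ncut.
  have [a ha hya] := rk1_level_cover y0 (leq_trans hp (ncut_le_height q)).
  by rewrite (level_indexE ha hya) /in_base ha; move: hya => /rk1_levelP [_ <-].
move=> /andP [hf]; have := level_index_level hf => /rk1_levelP [y0 <-].
by rewrite cell_lt_ncut // y0.
Qed.

Lemma indic_in_base q y : \1_I y = (in_base q (level_index q y))%:R :> R.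
Proof.
rewrite indicE; have := in_baseP q y.
case: in_base => -[h1 h2]; first by rewrite mem_set //; apply: h2.
by rewrite memNset //; move=> /h1.
Qed.

(* Along an orbit the index of the level of [C_q] climbs by one and can only jump
   back to 0 ([rk1_T_pred_level]), so in [n <= col_height q] steps each level
   of [C_q] is met at most twice. *)
Lemma S_n_le q x n : (n <= col_height q)%N -> S_n (R:=R) T I n x <= 2 * (ncut q)%:R.
Proof.
move=> nH; rewrite /S_n.
under eq_bigr => k _ do rewrite (indic_in_base q).
rewrite -natr_sum (sum_bool_count (fun k => in_base q (level_index q (iter k T x)))).
rewrite -(natrM R 2) ler_nat -count_in_base.
apply: (count_climb_restart_le (g := fun k => level_index q (iter k T x))) => //.
- by move=> k; apply: level_index_T_climb.
- by move=> k; apply: level_index_T_restart.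
- by move=> v /andP [].
Qed.

Lemma S_n_ge0 n x : 0 <= S_n (R:=R) T I n x.
Proof. by apply: sumr_ge0 => k _; rewrite indicE. Qed.

Local Notation mu := (@lebesgue_measure R).

Lemma lebesgue_rk1_level N i : mu (lvl N i) = (w N)%:E.
Proof.
rewrite /rk1_level lebesgue_measure_itv /= lte_fin ltrDl width_gt0 -EFinD.
by rewrite addrAC subrr add0r.
Qed.

Lemma lebesgue_I : mu I = l%:E.
Proof. by rewrite lebesgue_rk1_level width0. Qed.

Lemma lebesgue_bigcup_levels m (P : pred nat) :
  mu (\big[setU/set0]_(a < col_height m | P a) lvl m a) =
  ((count P (iota 0 (col_height m)))%:R * w m)%:E.
Proof.
rewrite measure_bigsetU_ord_cond //; last 2 first.
- by move=> a _; apply: measurable_itv.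
- move=> a b _ _ [y [ya yb]]; apply: val_inj.
  exact: (rk1_level_inj (ltn_ord a) (ltn_ord b) ya yb).
rewrite (eq_bigr (fun _ => (w m)%:E)); last by move=> a _; apply: lebesgue_rk1_level.
rewrite sumEFin big_mkcond /=; congr EFin.
rewrite (eq_bigr (fun a : 'I_(col_height m) => (P a : nat)%:R * w m)); last first.
  by move=> a _; case: (P a); rewrite ?mul1r ?mul0r.
by rewrite -big_distrl /= -natr_sum sum_bool_count.
Qed.

(* A level [a >= k] of [C_m] lies in [T^k] of level [a - k]. *)
Lemma lag_levels_sub m k :
  \big[setU/set0]_(a < col_height m | [&& k <= a, in_base m a & in_base m (a - k)]%N)
    lvl m a `<=` I `&` (iter k T @` I).
Proof.
elim/big_ind: _ => // [A B hA hB y [/hA|/hB] //|a /and3P [ka Aa Aak] y hy].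
split; first by apply/(in_baseP m); rewrite (level_indexE (ltn_ord a) hy).
have := @iter_rk1_T_onto m (a - k) k y; rewrite subnK //.
move=> /(_ hy (ltn_ord a)) [z hz <-]; exists z => //.
have hak : (a - k < col_height m)%N by case/andP: Aak.
by apply/(in_baseP m); rewrite (level_indexE hak hz).
Qed.

Lemma u_k_ge m k : (lag_count m k)%:R * w m / l ^+ 2 <= u_k mu T I k.
Proof.
have hle : (mu (I `&` iter k T @` I) <= l%:E)%E.
  by rewrite -lebesgue_I; apply: le_outer_measure; apply: subIsetl.
have fin : mu (I `&` iter k T @` I) \is a fin_num.
  by rewrite ge0_fin_numE ?measure_ge0 // (le_lt_trans hle) ?ltry.
rewrite /u_k; change (Measure.sort _) with (@lebesgue_measure R).
rewrite lebesgue_I /= ler_pM2r ?invr_gt0 ?exprn_gt0 //.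
have : (mu (\big[setU/set0]_(a < col_height m |
    [&& k <= a, in_base m a & in_base m (a - k)]%N) lvl m a) <= mu (I `&` iter k T @` I))%E.
  by apply: le_outer_measure; apply: lag_levels_sub.
move=> hsub; rewrite -lee_fin (fineK fin); apply: le_trans hsub.
by rewrite le_eqVlt (lebesgue_bigcup_levels m
  (fun a => [&& k <= a, in_base m a & in_base m (a - k)]%N)) eqxx.
Qed.

Lemma u_k_ge0 k : 0 <= u_k mu T I k.
Proof. by apply: divr_ge0; [|apply: exprn_ge0]; apply: fine_ge0; apply: measure_ge0. Qed.

(* a_n >= (w_m / l^2) sum_k lag_count m k >= (w_m / l^2) ncut m ^ 2 / 2 *)
Lemma a_n_ge m n : (col_height m <= n)%N -> (ncut m)%:R / (2 * l) <= a_n mu T I n.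
Proof.
move=> hn; apply: (@le_trans _ _ (\sum_(k < col_height m) u_k mu T I k)); last first.
  rewrite /a_n (big_ord_widen _ _ hn) big_mkcond /=; apply: ler_sum => k _.
  by case: ifP => // _; apply: u_k_ge0.
apply: (@le_trans _ _ (\sum_(k < col_height m) ((lag_count m k)%:R * w m / l ^+ 2))).
  2: by apply: ler_sum => k _; apply: u_k_ge.
rewrite -big_distrl -big_distrl /= -natr_sum.
have Rp : 0 < (ncut m)%:R :> R by rewrite ltr0n ncut_gt0.
have := sqr_ncut_le_lag_count m; rewrite -(ler_nat R) natrM natrX.
set S := (\sum_(k < _) lag_count m k)%:R; set n2 := (ncut m)%:R => hS.
rewrite /rk1_width -/(ncut m) -/n2.
have -> : n2 / (2 * l) = n2 ^+ 2 / 2 * (l / n2) / l ^+ 2 by field; rewrite !gt_eqF.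
by rewrite !ler_pM2r ?invr_gt0 ?exprn_gt0 ?divr_gt0 // ler_pdivrMr // mulrC.
Qed.

Lemma rk1_sweep_out : X `\` \bigcup_i (iter i T @` I) = set0.
Proof.
apply/seteqP; split => y // [[N [i [hi hy]]] hn]; apply: hn.
rewrite rk1_heightE in hi.
have := @iter_rk1_T_onto N 0 i y; rewrite add0n => /(_ hy hi) [z hz ez].
exists i => //; exists z => //; apply/(in_baseP N).
by rewrite (level_indexE (col_height_gt0 N) hz) /in_base col_height_gt0 code0 ncut_gt0.
Qed.

(* With [col_height m <= n <= col_height m.+1], both [S_n] and [a_n] are of
   order [ncut m], up to the factor [r m <= B]. *)
Lemma S_n_div_a_n_le B n x : (forall n, (r n <= B)%N) -> (1 <= n)%N ->
  `|S_n (R:=R) T I n x / a_n mu T I n| <= 4 * B%:R * l.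
Proof.
move=> hB hn; have [m /andP [h1 h2]] := col_height_bracket hn.
have aL := a_n_ge h1.
have Rp : 0 < (ncut m)%:R :> R by rewrite ltr0n ncut_gt0.
have ap : 0 < a_n mu T I n by apply: lt_le_trans aL; rewrite divr_gt0 // mulr_gt0.
have SU : S_n (R:=R) T I n x <= 2 * ((ncut m)%:R * B%:R).
  apply: (le_trans (S_n_le x h2)); rewrite ncut_S natrM ler_pM2l // ler_pM2l //.
  by rewrite ler_nat.
have Bp : 0 < B%:R :> R by rewrite ltr0n; have := hB 0%N; have := r_ge2 0%N; lia.
rewrite ger0_norm; last by rewrite divr_ge0 ?S_n_ge0 ?ltW.
rewrite ler_pdivrMr // (le_trans SU) //.
apply: le_trans (ler_wpM2l _ aL); last by rewrite !mulr_ge0 // ltW.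
by rewrite le_eqVlt; apply/orP; left; apply/eqP; field; rewrite gt_eqF.
Qed.

Lemma rk1_BRE B : (forall n, (r n <= B)%N) -> BRE_with mu X T I.
Proof.
move=> hB; rewrite /BRE_with; change (Measure.sort _) with (@lebesgue_measure R); split.
- split; first exact: measurable_itv.
  by move=> y hy; exists 0%N, 0%N; rewrite rk1_heightE col_height_gt0.
- by rewrite lebesgue_I lte_fin.
- by rewrite lebesgue_I ltry.
- by rewrite rk1_sweep_out measure0.
- by exists (4 * B%:R * l) => n hn; apply: aeW => x _; apply: S_n_div_a_n_le.
Qed.
End Geometry.
End RankOneModel.

Local Open Scope classical_set_scope.
Local Open Scope ring_scope.

Theorem mainTheorem10 (R : realType) (l : R) (r : nat -> nat)
    (s : nat -> nat -> nat) :
  0 < l ->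
  (forall n, (2 <= r n)%N) ->
  (exists B : nat, forall n, (r n <= B)%N) ->
  boundedly_rationally_ergodic (@lebesgue_measure R) (rk1_space l r s) (rk1_T l r s) /\
  BRE_with (@lebesgue_measure R) (rk1_space l r s) (rk1_T l r s) (rk1_level l r s 0 0).
Proof.
move=> l_gt0 r_ge2 [B hB].
have hI := @rk1_BRE r s r_ge2 R l l_gt0 B hB.
by split => //; exists (rk1_level l r s 0 0).
Qed.
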